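(* Let $G\subset\mathrm{Homeo}_+([0,1])$ be a group which has linked fixed points (i.e. is not without linked fixed points). Then there exist $h_1,h_2\in G$ and a segment $I\subset[0,1]$ such that $h_1(I)$ and $h_2(I)$ are disjoint segments contained in $I$.
   Context: For a group $G$ of homeomorphisms of $[0,1]$, a pair of successive fixed points of $G$ is a pair $\{a,b\}$, $a<b$, such that $(a,b)$ is a connected component of $[0,1]\setminus \mathrm{Fix}(g)$ for some $g\in G$. Two pairs $\{a,b\}$ and $\{c,d\}$ are linked if $(a,b)\cap\{c,d\}$ or $(c,d)\cap\{a,b\}$ consists of exactly one point. $G$ has linked fixed points if some two pairs of successive fixed points of $G$ are linked. *)

From Stdlib Require Import Reals.
Open Scope R_scope.

Definition I01 (x : R) : Prop := 0 <= x <= 1.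

Definition cont_on01 (f : R -> R) : Prop :=
  forall x, I01 x -> forall eps, eps > 0 ->
    exists delta, delta > 0 /\
      forall y, I01 y -> Rabs (y - x) < delta -> Rabs (f y - f x) < eps.

(* Values outside [0,1] are
   irrelevant. *)
Definition homeo_plus01 (f : R -> R) : Prop :=
  (forall x, I01 x -> I01 (f x)) /\
  cont_on01 f /\
  (exists g : R -> R,
      (forall x, I01 x -> I01 (g x)) /\ cont_on01 g /\
      (forall x, I01 x -> g (f x) = x) /\ (forall x, I01 x -> f (g x) = x)) /\
  (forall x y, I01 x -> I01 y -> x < y -> f x < f y).

(* G is a subgroup of Homeo_+([0,1]) (elements identified with functions;
   equality of maps is equality on [0,1]). *)
Definition is_group_homeo01 (G : (R -> R) -> Prop) : Prop :=
  (forall f, G f -> homeo_plus01 f) /\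
  G (fun x => x) /\
  (forall f g, G f -> G g -> G (fun x => f (g x))) /\
  (forall f, G f -> exists g, G g /\
      (forall x, I01 x -> g (f x) = x) /\ (forall x, I01 x -> f (g x) = x)).

(* (a,b) is a connected component of [0,1] \ Fix(g), with a < b:
   written out, a and b are fixed points in [0,1] and g has no fixed point
   strictly between them. *)
Definition successive_fixed (g : R -> R) (a b : R) : Prop :=
  I01 a /\ I01 b /\ a < b /\ g a = a /\ g b = b /\
  (forall x, a < x < b -> g x <> x).

Definition pair_of_successive_fixed_points (G : (R -> R) -> Prop) (a b : R) : Prop :=
  exists g, G g /\ successive_fixed g a b.

(* (a,b) ∩ {c,d} consists of exactly one point (for c < d). *)
Definition meets_exactly_once (a b c d : R) : Prop :=
  ((a < c < b) /\ ~ (a < d < b)) \/ (~ (a < c < b) /\ (a < d < b)).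

Definition linked (a b c d : R) : Prop :=
  meets_exactly_once a b c d \/ meets_exactly_once c d a b.

Definition has_linked_fixed_points (G : (R -> R) -> Prop) : Prop :=
  exists a b c d,
    pair_of_successive_fixed_points G a b /\
    pair_of_successive_fixed_points G c d /\
    linked a b c d.

From Stdlib Require Import Reals Lra Lia Classical_Prop FunctionalExtensionality.
Open Scope R_scope.

(* Basic configuration ("crossing"): points c < b of [0,1], an element f of G
   fixing b but moving c, and an element g of G fixing c without fixed points
   in (c,b).  Replacing f by f^-1 and g by g^-1 if needed, f pushes c to the
   right and g pushes points of (c,b) to the left.  By monotone convergence the
   g-orbit of a point of (c,b) decreases to a fixed point, necessarily c, so
   high powers of g squeeze any segment [c,z] with z < b into [c,c+eps].  With
   q the midpoint of (c,b), h1 = g^k o f and h2 = g^m (k, m large) map [c,q]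
   to disjoint subsegments of [c,q], h2's image lying to the left of h1's.

   Two linked pairs give the crossing configuration either in G itself or in
   its mirror image under the conjugation x |-> 1 - x; the conclusion
   transfers back through the same conjugation. *)

Lemma homeo_I01 (h : R -> R) : homeo_plus01 h -> forall x, I01 x -> I01 (h x).
Proof. intros [Hmap _]; exact Hmap. Qed.

Lemma homeo_lt (h : R -> R) : homeo_plus01 h ->
  forall x y, I01 x -> I01 y -> x < y -> h x < h y.
Proof. intros [_ [_ [_ Hmono]]]; exact Hmono. Qed.

Lemma homeo_le (h : R -> R) : homeo_plus01 h ->
  forall x y, I01 x -> I01 y -> x <= y -> h x <= h y.
Proof.
  intros Hh x y Hx Hy Hxy; destruct Hxy as [Hlt|Heq];
    [left; apply (homeo_lt h Hh); auto | right; rewrite Heq; reflexivity].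
Qed.

Lemma homeo_segment (h : R -> R) (u v x : R) : homeo_plus01 h ->
  I01 u -> I01 v -> u <= x <= v -> h u <= h x <= h v.
Proof.
  intros Hh Hu Hv Hx.
  assert (Ix : I01 x) by (unfold I01 in *; lra).
  split; apply (homeo_le h Hh); tauto.
Qed.

Lemma cont_on01_seq (f : R -> R) (u : nat -> R) (L : R) :
  cont_on01 f -> (forall n, I01 (u n)) -> I01 L ->
  Un_cv u L -> Un_cv (fun n => f (u n)) (f L).
Proof.
  intros Hc Hu HL Hcv eps Heps.
  destruct (Hc L HL eps Heps) as [delta [Hdelta Hclose]].
  destruct (Hcv delta Hdelta) as [N HN].
  exists N; intros n Hn. apply Hclose; [apply Hu | apply HN; exact Hn].
Qed.

Lemma orbit_limit_fixed (phi : R -> R) (u : nat -> R) (L : R) :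
  cont_on01 phi -> (forall n, I01 (u n)) -> I01 L ->
  (forall n, u (S n) = phi (u n)) -> Un_cv u L -> phi L = L.
Proof.
  intros Hc Hu HL Hstep Hcv.
  apply (UL_sequence (fun n => u (S n))).
  - intros eps Heps.
    destruct (cont_on01_seq phi u L Hc Hu HL Hcv eps Heps) as [N HN].
    exists N; intros n Hn. rewrite Hstep. exact (HN n Hn).
  - intros eps Heps. destruct (Hcv eps Heps) as [N HN].
    exists N; intros n Hn. apply HN; lia.
Qed.

Lemma Un_cv_const (e : R) : Un_cv (fun _ => e) e.
Proof.
  intros eps Heps; exists 0%nat; intros n _.
  unfold Rdist; rewrite Rminus_diag, Rabs_R0; exact Heps.
Qed.

Lemma decreasing_orbit_fixed_point (phi : R -> R) (z e : R) :
  homeo_plus01 phi -> 0 <= e -> z <= 1 -> phi z < z ->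
  (forall k, e <= Nat.iter k phi z) ->
  exists L, e <= L < z /\ phi L = L.
Proof.
  intros Hh He Hz Hdown Habove.
  set (u := fun k => Nat.iter k phi z).
  assert (Hu : forall k, I01 (u k) /\ u (S k) <= u k).
  { induction k as [|k [IHI IHdec]].
    - generalize (Habove 0%nat); unfold u, I01; simpl; lra.
    - assert (IS : I01 (u (S k))) by (generalize (Habove (S k)); unfold u, I01 in *; lra).
      split; [exact IS|].
      apply (homeo_le phi Hh); assumption. }
  destruct (decreasing_cv u) as [L HL].
  - intro n; apply Hu.
  - exists (- e); intros x [i ->]. unfold opp_seq. generalize (Habove i); unfold u; lra.
  - assert (HeL : e <= L) by exact (@Rle_cv_lim _ u e L Habove (Un_cv_const e) HL).
    assert (HLu1 : L <= u 1%nat) by exact (@decreasing_ineq u L (fun n => proj2 (Hu n)) HL 1).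
    assert (Hu1 : u 1%nat < z) by (unfold u; simpl; lra).
    assert (IL : I01 L) by (unfold I01; generalize (proj1 (Hu 1%nat)); unfold I01; lra).
    exists L; split; [lra|].
    exact (orbit_limit_fixed phi u L (proj1 (proj2 Hh)) (fun n => proj1 (Hu n)) IL
             (fun n => eq_refl) HL).
Qed.

Lemma orbit_enters (phi : R -> R) (c z e : R) :
  homeo_plus01 phi -> I01 c -> c < e <= z -> z <= 1 -> phi z < z ->
  (forall x, c < x <= z -> phi x <> x) ->
  exists k, Nat.iter k phi z < e.
Proof.
  intros Hh Hc He Hz Hdown Hnofix.
  apply NNPP; intro Hnever.
  destruct (decreasing_orbit_fixed_point phi z e Hh) as [L [HL Hfix]];
    [unfold I01 in Hc; lra | exact Hz | exact Hdown | |].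
  - intro k; apply Rnot_lt_le; intro Hk; apply Hnever; exists k; exact Hk.
  - apply (Hnofix L); [lra | exact Hfix].
Qed.

Lemma iter_fixed (g : R -> R) (c : R) : g c = c -> forall k, Nat.iter k g c = c.
Proof. intros Hc k; induction k as [|k IH]; simpl; [reflexivity | rewrite IH; exact Hc]. Qed.

Definition ping_pong_segment (G : (R -> R) -> Prop) : Prop :=
  exists (h1 h2 : R -> R) (u v : R),
    G h1 /\ G h2 /\
    0 <= u /\ u < v /\ v <= 1 /\
    (forall x, u <= x <= v -> u <= h1 x <= v) /\
    (forall x, u <= x <= v -> u <= h2 x <= v) /\
    (forall x y, u <= x <= v -> u <= y <= v -> h1 x <> h2 y).

Definition crossing_configuration (G : (R -> R) -> Prop) : Prop :=
  exists (f g : R -> R) (c b : R),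
    G f /\ G g /\ I01 c /\ I01 b /\ c < b /\
    f b = b /\ f c <> c /\ g c = c /\ (forall x, c < x < b -> g x <> x).

Lemma crossing_intro (G : (R -> R) -> Prop) (f g : R -> R) (c b : R) :
  G f -> G g -> I01 c -> I01 b -> c < b ->
  f b = b -> f c <> c -> g c = c -> (forall x, c < x < b -> g x <> x) ->
  crossing_configuration G.
Proof. intros; exists f, g, c, b; tauto. Qed.

Section Group.

Variable G : (R -> R) -> Prop.
Hypothesis HG : is_group_homeo01 G.

Lemma group_homeo (f : R -> R) : G f -> homeo_plus01 f.
Proof. exact (proj1 HG f). Qed.

Lemma group_comp (f g : R -> R) : G f -> G g -> G (fun x => f (g x)).
Proof. exact (proj1 (proj2 (proj2 HG)) f g). Qed.

Lemma group_iter (g : R -> R) : G g -> forall k, G (Nat.iter k g).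
Proof.
  intros Hg k; induction k as [|k IH]; [exact (proj1 (proj2 HG)) | exact (group_comp g _ Hg IH)].
Qed.

Lemma group_inverse_reverses (f : R -> R) : G f ->
  exists g, G g /\ (forall y, I01 y -> (g y = y <-> f y = y)) /\
    (forall y, I01 y -> f y < y -> y < g y) /\
    (forall y, I01 y -> y < f y -> g y < y).
Proof.
  intros Hf. destruct (proj2 (proj2 (proj2 HG)) f Hf) as [g [Hg [Hgf Hfg]]].
  assert (Hhf := group_homeo f Hf). assert (Hhg := group_homeo g Hg).
  exists g; split; [exact Hg | split; [|split]].
  - intros y Hy; split; intro Hfix.
    + rewrite <- Hfix at 1. apply Hfg; exact Hy.
    + rewrite <- Hfix at 1. apply Hgf; exact Hy.
  - intros y Hy Hlt. rewrite <- (Hgf y Hy) at 1.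
    apply (homeo_lt g Hhg); auto. apply (homeo_I01 f Hhf y Hy).
  - intros y Hy Hlt. rewrite <- (Hgf y Hy) at 2.
    apply (homeo_lt g Hhg); auto. apply (homeo_I01 f Hhf y Hy).
Qed.

Lemma orient_right (f : R -> R) (x : R) : G f -> I01 x -> f x <> x ->
  exists f', G f' /\ x < f' x /\ (forall y, I01 y -> (f' y = y <-> f y = y)).
Proof.
  intros Hf Hx Hmove.
  destruct (group_inverse_reverses f Hf) as [g [Hg [Hfix [Hright _]]]].
  destruct (Rtotal_order (f x) x) as [Hlt|[Heq|Hgt]]; [|contradiction|].
  - exists g; auto.
  - exists f; split; [exact Hf | split; [exact Hgt | tauto]].
Qed.

Lemma orient_left (f : R -> R) (x : R) : G f -> I01 x -> f x <> x ->
  exists f', G f' /\ f' x < x /\ (forall y, I01 y -> (f' y = y <-> f y = y)).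
Proof.
  intros Hf Hx Hmove.
  destruct (group_inverse_reverses f Hf) as [g [Hg [Hfix [_ Hleft]]]].
  destruct (Rtotal_order (f x) x) as [Hlt|[Heq|Hgt]]; [|contradiction|].
  - exists f; split; [exact Hf | split; [exact Hlt | tauto]].
  - exists g; auto.
Qed.

Lemma ping_pong_criterion (h1 h2 : R -> R) (u v : R) :
  G h1 -> G h2 -> 0 <= u -> u < v -> v <= 1 ->
  u <= h1 u -> h1 v <= v -> u <= h2 u -> h2 v < h1 u ->
  ping_pong_segment G.
Proof.
  intros H1 H2 Hu Huv Hv H1u H1v H2u Hsep.
  assert (Iu : I01 u) by (unfold I01; lra). assert (Iv : I01 v) by (unfold I01; lra).
  pose proof (fun x => homeo_segment h1 u v x (group_homeo h1 H1) Iu Iv) as B1.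
  pose proof (fun x => homeo_segment h2 u v x (group_homeo h2 H2) Iu Iv) as B2.
  assert (H1uv : h1 u <= h1 v) by (apply B1; lra).
  exists h1, h2, u, v; repeat split; try assumption.
  - generalize (B1 x H); lra.
  - generalize (B1 x H); lra.
  - generalize (B2 x H); lra.
  - generalize (B2 x H); lra.
  - intros x y Hx Hy E. generalize (B1 x Hx) (B2 y Hy); lra.
Qed.

Lemma crossing_ping_pong : crossing_configuration G -> ping_pong_segment G.
Proof.
  intros [f [g [c [b [Hf [Hg [Ic [Ib [Hcb [Hfb [Hfc [Hgc Hgfree]]]]]]]]]]]].
  destruct (orient_right f c Hf Ic Hfc) as [f' [Hf' [Hf'c Hf'fix]]].
  assert (Hhf' := group_homeo f' Hf').
  assert (Hf'b : f' b = b) by (apply Hf'fix; auto).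
  set (q := (c + b) / 2).
  assert (Iq : I01 q) by (unfold q, I01 in *; lra).
  assert (Hf'q : f' q < b) by (rewrite <- Hf'b; apply (homeo_lt f' Hhf'); auto; unfold q; lra).
  set (z := Rmax q (f' q)).
  assert (Hqz : q <= z) by apply Rmax_l.
  assert (Hf'qz : f' q <= z) by apply Rmax_r.
  assert (Hzb : z < b) by (apply Rmax_lub_lt; unfold q in *; lra).
  assert (Iz : I01 z) by (unfold I01 in *; lra).
  destruct (orient_left g z Hg Iz (Hgfree z ltac:(unfold q in *; lra)))
    as [g' [Hg' [Hg'z Hg'fix]]].
  assert (Hhg' := group_homeo g' Hg').
  assert (Hg'c : g' c = c) by (apply Hg'fix; auto).
  assert (Hg'free : forall x, c < x <= z -> g' x <> x).
  { intros x Hx Hfix. apply (Hgfree x); [lra|]. apply Hg'fix; [unfold I01 in *; lra | exact Hfix]. }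
  (* h1 = g'^k o f' pushes c to the right and q to the left. *)
  destruct (orbit_enters g' c z q Hhg' Ic ltac:(unfold q in *; lra) ltac:(unfold I01 in *; lra)
              Hg'z Hg'free) as [k Hk].
  assert (HGk := group_iter g' Hg' k). assert (Hhk := group_homeo _ HGk).
  set (h1 := fun x => Nat.iter k g' (f' x)).
  assert (HG1 : G h1) by exact (group_comp _ _ HGk Hf').
  assert (Hh1c : c < h1 c).
  { unfold h1. rewrite <- (iter_fixed g' c Hg'c k) at 1.
    apply (homeo_lt _ Hhk); auto. apply (homeo_I01 f' Hhf' c Ic). }
  assert (Hh1q : h1 q < q).
  { unfold h1. apply Rle_lt_trans with (Nat.iter k g' z); [|exact Hk].
    apply (homeo_le _ Hhk); auto. apply (homeo_I01 f' Hhf' q Iq). }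
  assert (Hh1cq : h1 c <= h1 q) by (apply (homeo_le h1 (group_homeo h1 HG1)); auto; unfold q; lra).
  (* h2 = g'^m squeezes [c,q] to the left of h1 c. *)
  destruct (orbit_enters g' c z (h1 c) Hhg' Ic ltac:(lra) ltac:(unfold I01 in *; lra)
              Hg'z Hg'free) as [m Hm].
  assert (HGm := group_iter g' Hg' m). assert (Hhm := group_homeo _ HGm).
  assert (Hh2q : Nat.iter m g' q < h1 c).
  { apply Rle_lt_trans with (Nat.iter m g' z); [apply (homeo_le _ Hhm) |]; auto. }
  apply (ping_pong_criterion h1 (Nat.iter m g') c q HG1 HGm); unfold I01 in *;
    try rewrite (iter_fixed g' c Hg'c m); unfold q in *; lra.
Qed.

End Group.

Definition mirror (f : R -> R) : R -> R := fun x => 1 - f (1 - x).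

Lemma mirror_involutive (f : R -> R) : mirror (mirror f) = f.
Proof.
  unfold mirror; apply functional_extensionality; intro x.
  replace (1 - (1 - x)) with x by ring; ring.
Qed.

Lemma I01_mirror (x : R) : I01 x -> I01 (1 - x).
Proof. unfold I01; lra. Qed.

Lemma cont_on01_mirror (f : R -> R) : cont_on01 f -> cont_on01 (mirror f).
Proof.
  intros Hc x Hx eps Heps.
  destruct (Hc (1 - x) (I01_mirror x Hx) eps Heps) as [delta [Hdelta Hclose]].
  exists delta; split; [exact Hdelta|]. intros y Hy Hyx. unfold mirror.
  replace (1 - f (1 - y) - (1 - f (1 - x))) with (- (f (1 - y) - f (1 - x))) by ring.
  rewrite Rabs_Ropp. apply Hclose; [apply I01_mirror; exact Hy|].
  replace (1 - y - (1 - x)) with (- (y - x)) by ring. rewrite Rabs_Ropp; exact Hyx.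
Qed.

Lemma homeo_mirror (f : R -> R) : homeo_plus01 f -> homeo_plus01 (mirror f).
Proof.
  intros [Hmap [Hc [[g [Hgmap [Hgc [Hgf Hfg]]]] Hmono]]].
  split; [|split; [|split]].
  - intros x Hx. apply I01_mirror, Hmap, I01_mirror; exact Hx.
  - apply cont_on01_mirror; exact Hc.
  - exists (mirror g). split; [|split; [|split]].
    + intros x Hx. apply I01_mirror, Hgmap, I01_mirror; exact Hx.
    + apply cont_on01_mirror; exact Hgc.
    + intros x Hx. unfold mirror. replace (1 - (1 - f (1 - x))) with (f (1 - x)) by ring.
      rewrite (Hgf (1 - x) (I01_mirror x Hx)); ring.
    + intros x Hx. unfold mirror. replace (1 - (1 - g (1 - x))) with (g (1 - x)) by ring.
      rewrite (Hfg (1 - x) (I01_mirror x Hx)); ring.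
  - intros x y Hx Hy Hxy. unfold mirror.
    assert (f (1 - y) < f (1 - x)) by (apply Hmono; try apply I01_mirror; auto; lra).
    lra.
Qed.

(* The mirror image of G: the group of conjugates mirror f of elements of G
   (as mirror is an involution, f belongs to it iff mirror f belongs to G). *)
Definition mirror_group (G : (R -> R) -> Prop) : (R -> R) -> Prop :=
  fun f => G (mirror f).

Lemma group_mirror (G : (R -> R) -> Prop) :
  is_group_homeo01 G -> is_group_homeo01 (mirror_group G).
Proof.
  intros [Hhomeo [Hid [Hcomp Hinv]]]. unfold mirror_group.
  split; [|split; [|split]].
  - intros f Hf. rewrite <- (mirror_involutive f). apply homeo_mirror, Hhomeo; exact Hf.
  - replace (mirror (fun x => x)) with (fun x : R => x); [exact Hid|].
    unfold mirror; apply functional_extensionality; intro x; ring.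
  - intros f g Hf Hg.
    replace (mirror (fun x => f (g x))) with (fun x => mirror f (mirror g x));
      [exact (Hcomp _ _ Hf Hg)|].
    unfold mirror; apply functional_extensionality; intro x.
    replace (1 - (1 - g (1 - x))) with (g (1 - x)) by ring; reflexivity.
  - intros f Hf. destruct (Hinv _ Hf) as [g [Hg [Hgf Hfg]]].
    exists (mirror g); rewrite mirror_involutive; split; [exact Hg | split].
    + intros x Hx. specialize (Hgf (1 - x) (I01_mirror x Hx)). unfold mirror in *.
      replace (1 - (1 - x)) with x in Hgf by ring. lra.
    + intros x Hx. specialize (Hfg (1 - x) (I01_mirror x Hx)). unfold mirror in *. lra.
Qed.

Lemma ping_pong_segment_mirror (G : (R -> R) -> Prop) :
  ping_pong_segment (mirror_group G) -> ping_pong_segment G.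
Proof.
  intros [h1 [h2 [u [v [H1 [H2 [Hu [Huv [Hv [B1 [B2 Hdisj]]]]]]]]]]].
  exists (mirror h1), (mirror h2), (1 - v), (1 - u).
  split; [exact H1 | split; [exact H2 |]].
  repeat split; try lra; unfold mirror.
  - generalize (B1 (1 - x) ltac:(lra)); lra.
  - generalize (B1 (1 - x) ltac:(lra)); lra.
  - generalize (B2 (1 - x) ltac:(lra)); lra.
  - generalize (B2 (1 - x) ltac:(lra)); lra.
  - intros x y Hx Hy E. apply (Hdisj (1 - x) (1 - y)); lra.
Qed.

Lemma crossing_mirror (G : (R -> R) -> Prop) (f g : R -> R) (a d : R) :
  G f -> G g -> I01 a -> I01 d -> a < d ->
  f a = a -> f d <> d -> g d = d -> (forall x, a < x < d -> g x <> x) ->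
  crossing_configuration (mirror_group G).
Proof.
  intros Hf Hg Ia Id Had Hfa Hfd Hgd Hgfree.
  apply (crossing_intro _ (mirror f) (mirror g) (1 - d) (1 - a));
    unfold mirror_group; try rewrite mirror_involutive; try apply I01_mirror;
    unfold mirror; try replace (1 - (1 - a)) with a by ring;
    try replace (1 - (1 - d)) with d by ring; try assumption; try lra.
  intros x Hx E. apply (Hgfree (1 - x)); lra.
Qed.

Lemma linked_crossing (G : (R -> R) -> Prop) :
  has_linked_fixed_points G ->
  crossing_configuration G \/ crossing_configuration (mirror_group G).
Proof.
  intros [a [b [c [d [[f [Hf [Ia [Ib [Hab [Hfa [Hfb Hffree]]]]]]]
                     [[g [Hg [Ic [Id [Hcd [Hgc [Hgd Hgfree]]]]]]] Hlink]]]]]].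
  destruct Hlink as [[[Hc Hd]|[Hc Hd]]|[[Ha Hb]|[Ha Hb]]].
  - (* a < c < b <= d *)
    left. apply (crossing_intro G f g c b); try assumption; try lra.
    + apply Hffree; lra.
    + intros x Hx. apply Hgfree. split; [lra|].
      destruct (Rlt_or_le d b); [exfalso; apply Hd; lra | lra].
  - (* c <= a < d < b *)
    right. apply (crossing_mirror G f g a d); try assumption; try lra.
    + apply Hffree; lra.
    + intros x Hx. apply Hgfree. split; [|lra].
      destruct (Rlt_or_le a c); [exfalso; apply Hc; lra | lra].
  - (* c < a < d <= b *)
    left. apply (crossing_intro G g f a d); try assumption; try lra.
    + apply Hgfree; lra.
    + intros x Hx. apply Hffree. split; [lra|].
      destruct (Rlt_or_le b d); [exfalso; apply Hb; lra | lra].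
  - (* a <= c < b < d *)
    right. apply (crossing_mirror G g f c b); try assumption; try lra.
    + apply Hgfree; lra.
    + intros x Hx. apply Hffree. split; [|lra].
      destruct (Rlt_or_le c a); [exfalso; apply Ha; lra | lra].
Qed.

Theorem lemmal (G : (R -> R) -> Prop) :
  is_group_homeo01 G ->
  has_linked_fixed_points G ->
  exists (h1 h2 : R -> R) (u v : R),
    G h1 /\ G h2 /\
    0 <= u /\ u < v /\ v <= 1 /\
    (forall x, u <= x <= v -> u <= h1 x <= v) /\
    (forall x, u <= x <= v -> u <= h2 x <= v) /\
    (forall x y, u <= x <= v -> u <= y <= v -> h1 x <> h2 y).
Proof.
  intros HG Hlinked. change (ping_pong_segment G).
  destruct (linked_crossing G Hlinked) as [Hcross | Hcross].
  - exact (crossing_ping_pong G HG Hcross).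
  - apply ping_pong_segment_mirror, crossing_ping_pong; [apply group_mirror |]; assumption.
Qed.
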